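(* Let $\mathcal{C}$ be an abelian $k$-linear category, $\mathcal{E}=(E_i)_{i\in\mathbb{Z}}$ a projective sequence in $\mathcal{C}$ with $\dim_k\operatorname{Hom}(E_i,X)<\infty$ for all $X\in\mathcal{C}$, and $A=A(\mathcal{E})$. Then: (i) $\mathcal{E}$ is coherent if and only if for every object $X\in\mathcal{C}$ the $A$-modules $\Gamma_{\le m}X$ are finitely generated for all $m\in\mathbb{Z}$; (ii) $\mathcal{E}$ is ample if and only if for every $X\in\mathcal{C}$ and every $m\in\mathbb{Z}$ there exists a surjection $\bigoplus_{j=1}^sE_{i_j}\to X$ for some integers $i_1,\dots,i_s$ with $i_j\le m$ for all $j$.
   Context: $k$ is a fixed field. A $\mathbb{Z}$-algebra is an associative $k$-algebra $A=\bigoplus_{i\le j}A_{ij}$ with $A_{ii}=k$, only nonzero products $A_{jk}\otimes A_{ij}\to A_{ik}$, units acting as identity, $\dim A_{ij}<\infty$. An $A$-module is a graded right module $M=\bigoplus_iM_i$ with action $M_j\otimes A_{ij}\to M_i$. $P_j=\bigoplus_iA_{ij}$; $M$ is finitely generated if it is a quotient of a finite direct sum of $P_j$'s. For the sequence $\mathcal{E}$, $A(\mathcal{E})$ has $A_{ij}=\operatorname{Hom}_{\mathcal{C}}(E_i,E_j)$ for $i<j$, $A_{ii}=k$, multiplication by composition. $\Gamma_{\le m}X=\bigoplus_{i\le m}\operatorname{Hom}(E_i,X)$ as an $A$-module. $\mathcal{E}$ is projective if for every surjection $X\to Y$ there is $n$ with $\operatorname{Hom}(E_i,X)\to\operatorname{Hom}(E_i,Y)$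 surjective for $i<n$. $\mathcal{C}_0$ is the full subcategory of $X$ with $\operatorname{Hom}(E_i,X)=0$ for $i\ll0$. A projective sequence is coherent if for every $X$ and $m$ there are $i_1,\dots,i_s\le m$ with $\bigoplus_j\operatorname{Hom}(E_{i_j},X)\otimes\operatorname{Hom}(E_i,E_{i_j})\to\operatorname{Hom}(E_i,X)$ surjective for $i\ll0$; it is ample if moreover $\mathcal{C}_0=0$. *)

From HB Require Import structures.
From mathcomp Require Import all_boot all_order all_algebra.
Set Implicit Arguments. Unset Strict Implicit. Unset Printing Implicit Defensive.
Import Order.TTheory GRing.Theory Num.Theory.
Local Open Scope ring_scope.

Record kcat (k : fieldType) := KCat {
  Ob :> Type;
  Mor : Ob -> Ob -> lmodType k;
  comp : forall X Y Z : Ob, Mor Y Z -> Mor X Y -> Mor X Z;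
  idm : forall X : Ob, Mor X X;
  compA : forall (X Y Z W : Ob) (h : Mor Z W) (g : Mor Y Z) (f : Mor X Y),
      comp h (comp g f) = comp (comp h g) f;
  comp1m : forall (X Y : Ob) (f : Mor X Y), comp (idm Y) f = f;
  compm1 : forall (X Y : Ob) (f : Mor X Y), comp f (idm X) = f;
  comp_linl : forall (X Y Z : Ob) (f : Mor X Y) (a : k) (g1 g2 : Mor Y Z),
      comp (a *: g1 + g2) f = a *: comp g1 f + comp g2 f;
  comp_linr : forall (X Y Z : Ob) (g : Mor Y Z) (a : k) (f1 f2 : Mor X Y),
      comp g (a *: f1 + f2) = a *: comp g f1 + comp g f2
}.
Arguments Mor {k C} : rename.
Arguments comp {k C X Y Z} : rename.
Arguments idm {k C} : rename.

Section Cat.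
Variables (k : fieldType) (C : kcat k).

Definition mono (X Y : C) (f : Mor X Y) : Prop :=
  forall (W : C) (g h : Mor W X), comp f g = comp f h -> g = h.

(* epimorphism = "surjection" in an abelian category *)
Definition epi (X Y : C) (f : Mor X Y) : Prop :=
  forall (W : C) (g h : Mor Y W), comp g f = comp h f -> g = h.

Definition is_zero_obj (Z : C) : Prop :=
  (forall (Y : C) (f : Mor Z Y), f = 0) /\ (forall (Y : C) (f : Mor Y Z), f = 0).

Definition is_kernel (X Y K : C) (f : Mor X Y) (ker : Mor K X) : Prop :=
  comp f ker = 0 /\
  forall (W : C) (g : Mor W X), comp f g = 0 -> exists! h : Mor W K, comp ker h = g.

Definition is_cokernel (X Y Q : C) (f : Mor X Y) (cok : Mor Y Q) : Prop :=
  comp cok f = 0 /\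
  forall (W : C) (g : Mor Y W), comp g f = 0 -> exists! h : Mor Q W, comp h cok = g.

Definition is_biproduct (s : nat) (F : 'I_s -> C) (S : C)
    (inj : forall t, Mor (F t) S) (prj : forall t, Mor S (F t)) : Prop :=
  [/\ forall t, comp (prj t) (inj t) = idm (F t),
      forall t u, t != u -> comp (prj t) (inj u) = 0 &
      \sum_(t < s) comp (inj t) (prj t) = idm S].

Definition abelian : Prop :=
  (exists Z : C, is_zero_obj Z) /\
  (forall X Y : C, exists (S : C) (i1 : Mor X S) (i2 : Mor Y S)
                          (p1 : Mor S X) (p2 : Mor S Y),
     [/\ comp p1 i1 = idm X, comp p2 i2 = idm Y, comp p1 i2 = 0,
         comp p2 i1 = 0 & comp i1 p1 + comp i2 p2 = idm S]) /\
  (forall (X Y : C) (f : Mor X Y), exists (K : C) (ker : Mor K X), is_kernel f ker) /\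
  (forall (X Y : C) (f : Mor X Y), exists (Q : C) (cok : Mor Y Q), is_cokernel f cok) /\
  (forall (X Y : C) (f : Mor X Y), mono f ->
     exists (Z : C) (g : Mor Y Z), is_kernel g f) /\
  (forall (X Y : C) (f : Mor X Y), epi f ->
     exists (Z : C) (g : Mor Z X), is_cokernel g f).

Definition findim (V : lmodType k) : Prop :=
  exists (n : nat) (v : 'I_n -> V), forall x : V,
    exists c : 'I_n -> k, x = \sum_(i < n) c i *: v i.

Variable E : int -> C.

Definition projective_seq : Prop :=
  forall (X Y : C) (p : Mor X Y), epi p ->
    exists n : int, forall i : int, i < n ->
      forall g : Mor (E i) Y, exists h : Mor (E i) X, comp p h = g.

Definition in_C0 (X : C) : Prop :=
  exists n : int, forall i : int, i < n -> forall f : Mor (E i) X, f = 0.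

Definition coherent : Prop :=
  projective_seq /\
  forall (X : C) (m : int), exists (s : nat) (ij : 'I_s -> int),
    (forall t, ij t <= m) /\
    exists n : int, forall i : int, i < n ->
      (* the map  (+)_t Mor(E_{i_t},X) (x) Mor(E_i,E_{i_t}) -> Mor(E_i,X)
         is surjective: every y is a finite sum of composites *)
      forall y : Mor (E i) X,
        exists (N : nat) (tt : 'I_N -> 'I_s)
               (f : forall l, Mor (E (ij (tt l))) X)
               (a : forall l, Mor (E i) (E (ij (tt l)))),
          y = \sum_(l < N) comp (f l) (a l).

Definition ample : Prop :=
  coherent /\ forall X : C, in_C0 X -> is_zero_obj X.

(* A(E)_{ij} = Mor(E_i,E_j) for i<j, A_{ii} = k, 0 for i>j.
   (Gamma_{<= m} X)_i = Mor(E_i,X) for i <= m and 0 for i > m; the right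
   action M_j (x) A_{ij} -> M_i is composition (and scalar mult. for i = j).
   [gamma_act_image i j x y] : y lies in the image x . A_{ij} of the element
   x in degree j, i.e. in the image of the degree-i component of the module
   map P_j -> Gamma_{<=m} X sending 1 in A_{jj} to x. *)
Definition gamma_act_image (X : C) (i j : int) (x : Mor (E j) X) (y : Mor (E i) X)
    : Prop :=
  (i < j /\ exists a : Mor (E i) (E j), y = comp x a)
  \/ (exists (e : j = i) (c : k), y = c *: eq_rect j (fun l => Mor (E l) X) x i e)
  \/ y = 0.

(* Gamma_{<= m} X is finitely generated: there is a surjective module map
   (+)_{t} P_{j_t} -> Gamma_{<= m} X; such a map is given by the images
   x_t in degree j_t of the units, and surjectivity in degree i means every
   element of degree i is a sum of elements x_t . a_t with a_t in A_{i j_t}.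
   (Generators of degree > m are zero and can be omitted, hence j_t <= m;
   components of degree i > m are zero, so only i <= m needs checking.) *)
Definition Gamma_fg (X : C) (m : int) : Prop :=
  exists (s : nat) (j : 'I_s -> int) (x : forall t, Mor (E (j t)) X),
    (forall t, j t <= m) /\
    forall i : int, i <= m -> forall y : Mor (E i) X,
      exists f : 'I_s -> Mor (E i) X,
        (forall t, gamma_act_image (x t) (f t)) /\ y = \sum_(t < s) f t.

Definition surj_from_sum (X : C) (m : int) : Prop :=
  exists (s : nat) (ij : 'I_s -> int), (forall t, ij t <= m) /\
    exists (S : C) (inj : forall t, Mor (E (ij t)) S) (prj : forall t, Mor S (E (ij t))),
      @is_biproduct s (fun t => E (ij t)) S inj prj /\
      exists g : Mor S X, epi g.

End Cat.

(* (i) Coherence says that Hom(E_i, X) is generated by finitely many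
   Hom(E_{i_t}, X), i_t <= m, for i << 0.  To generate Gamma_{<= m} X one
   must in addition cover the finitely many degrees between that bound and m,
   which k-bases of the finite-dimensional spaces Hom(E_a, X) do.  Conversely,
   generators in degrees j_t <= m act on degrees below every j_t by
   composition only.
   (ii) Generators x_t of Gamma_{<= m} X define g : (+)_t E_{j_t} -> X whose
   cokernel Q receives no nonzero map from any E_i with i <= m; as the
   cokernel map is epi and E is projective, Q lies in C_0, so Q = 0 and g is
   epi.  Conversely, lifting along such an epimorphism gives coherence, and an
   object of C_0 only receives the zero map from (+)_t E_{i_t} with i_t << 0,
   which is epi only when the object is zero. *)
From mathcomp Require Import all_boot all_order all_algebra zify.
From Stdlib Require Import ClassicalEpsilon.
Set Implicit Arguments. Unset Strict Implicit. Unset Printing Implicit Defensive.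
Import Order.TTheory GRing.Theory Num.Theory.
Local Open Scope ring_scope.

Section Composition.
Variables (k : fieldType) (C : kcat k).

Lemma compm0 (X Y Z : C) (g : Mor Y Z) : comp g (0 : Mor X Y) = 0.
Proof.
have := @comp_linr _ _ X _ _ g (-1) 0 0.
by rewrite scaler0 addr0 scaleN1r addNr.
Qed.

Lemma comp0m (X Y Z : C) (f : Mor X Y) : comp (0 : Mor Y Z) f = 0.
Proof.
have := @comp_linl _ _ _ _ Z f (-1) 0 0.
by rewrite scaler0 addr0 scaleN1r addNr.
Qed.

Lemma compDr (X Y Z : C) (g : Mor Y Z) (f1 f2 : Mor X Y) :
  comp g (f1 + f2) = comp g f1 + comp g f2.
Proof. by have := comp_linr g 1 f1 f2; rewrite !scale1r. Qed.

Lemma compDl (X Y Z : C) (g1 g2 : Mor Y Z) (f : Mor X Y) :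
  comp (g1 + g2) f = comp g1 f + comp g2 f.
Proof. by have := comp_linl f 1 g1 g2; rewrite !scale1r. Qed.

Lemma compZr (X Y Z : C) (g : Mor Y Z) a (f : Mor X Y) :
  comp g (a *: f) = a *: comp g f.
Proof. by have := comp_linr g a f 0; rewrite !addr0 compm0 addr0. Qed.

Lemma compZl (X Y Z : C) (g : Mor Y Z) a (f : Mor X Y) :
  comp (a *: g) f = a *: comp g f.
Proof. by have := comp_linl f a g 0; rewrite !addr0 comp0m addr0. Qed.

Lemma compBl (X Y Z : C) (g1 g2 : Mor Y Z) (f : Mor X Y) :
  comp (g1 - g2) f = comp g1 f - comp g2 f.
Proof. by rewrite compDl -scaleN1r compZl scaleN1r. Qed.

Lemma comp_sumr (X Y Z : C) (g : Mor Y Z) (I : Type) (r : seq I) (P : pred I)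
    (F : I -> Mor X Y) :
  comp g (\sum_(i <- r | P i) F i) = \sum_(i <- r | P i) comp g (F i).
Proof. by apply: (big_morph (comp g)); [exact: compDr | exact: compm0]. Qed.

Lemma comp_suml (X Y Z : C) (f : Mor X Y) (I : Type) (r : seq I) (P : pred I)
    (F : I -> Mor Y Z) :
  comp (\sum_(i <- r | P i) F i) f = \sum_(i <- r | P i) comp (F i) f.
Proof.
by apply: (big_morph (comp^~ f)) => [g1 g2|]; [exact: compDl | exact: comp0m].
Qed.

End Composition.

Lemma int_family_lbound (I : finType) (j : I -> int) (m : int) :
  exists2 lo : int, lo <= m & forall t, lo <= j t.
Proof.
exists (m - \sum_t `|m - j t|); first by rewrite gerBl sumr_ge0.
move=> t; have : `|m - j t| <= \sum_t `|m - j t|.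
  by rewrite (bigD1 t) //= lerDl sumr_ge0.
lia.
Qed.

Lemma findim_basis (k : fieldType) (V : int -> lmodType k) :
  (forall a, findim (V a)) ->
  exists (dim : int -> nat) (basis : forall a, 'I_(dim a) -> V a),
    forall a (y : V a), exists c : 'I_(dim a) -> k,
      y = \sum_(l < dim a) c l *: basis a l.
Proof.
move=> Vfin.
have HV a : {nv : {n : nat & 'I_n -> V a} |
    forall y, exists c : 'I_(tag nv) -> k, y = \sum_l c l *: tagged nv l}.
  apply: constructive_indefinite_description.
  by have [n [v Hv]] := Vfin a; exists (existT _ n v).
by exists (fun a => tag (sval (HV a))), (fun a => tagged (sval (HV a))) => a;
  exact: (svalP (HV a)).
Qed.

Section GammaSpan.
Variables (k : fieldType) (C : kcat k) (E : int -> C) (X : C).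

Notation act_image := (@gamma_act_image k C E X).

Lemma act_image0 (j i : int) (x : Mor (E j) X) : act_image x (0 : Mor (E i) X).
Proof. by right; right. Qed.

Lemma act_imageD (j i : int) (x : Mor (E j) X) (y1 y2 : Mor (E i) X) :
  act_image x y1 -> act_image x y2 -> act_image x (y1 + y2).
Proof.
case=> [[lt1 [a1 ->]] | [[e1 [c1 ->]] | ->]];
case=> [[lt2 [a2 ->]] | [[e2 [c2 ->]] | ->]]; rewrite ?addr0 ?add0r.
- by left; split=> //; exists (a1 + a2); rewrite compDr.
- by exfalso; move: lt1; rewrite e2 ltxx.
- by left; split=> //; exists a1.
- by exfalso; move: lt2; rewrite e1 ltxx.
- by right; left; exists e1, (c1 + c2); rewrite (eq_irrelevance e2 e1) scalerDl.
- by right; left; exists e1, c1.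
- by left; split=> //; exists a2.
- by right; left; exists e2, c2.
- by right; right.
Qed.

Lemma act_image_lt (j i : int) (x : Mor (E j) X) (y : Mor (E i) X) :
  i < j -> act_image x y -> exists a : Mor (E i) (E j), y = comp x a.
Proof.
move=> ltij [[_ //] | [[e _] | ->]]; last by exists 0; rewrite compm0.
by exfalso; move: ltij; rewrite e ltxx.
Qed.

Lemma comp_act_image (Q : C) (h : Mor X Q) (j i : int) (x : Mor (E j) X)
    (y : Mor (E i) X) :
  comp h x = 0 -> act_image x y -> comp h y = 0.
Proof.
move=> hx [[_ [a ->]] | [[e [c ->]] | ->]]; last exact: compm0.
  by rewrite compA hx comp0m.
by clear y; case: i / e; rewrite compZr hx scaler0.
Qed.

Definition spanned_by (T : finType) (j : T -> int) (x : forall t, Mor (E (j t)) X)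
    (i : int) (y : Mor (E i) X) : Prop :=
  exists f : T -> Mor (E i) X, (forall t, act_image (x t) (f t)) /\ y = \sum_t f t.

Variables (T : finType) (j : T -> int) (x : forall t, Mor (E (j t)) X).

Lemma spanned_sum i (I : Type) (r : seq I) (P : pred I) (F : I -> Mor (E i) X) :
  (forall l, P l -> spanned_by x (F l)) -> spanned_by x (\sum_(l <- r | P l) F l).
Proof.
move=> HF; apply: (big_ind (@spanned_by T j x i)) => //.
- by exists (fun=> 0); split=> [t|]; [exact: act_image0 | rewrite big1].
- move=> _ _ [f1 [H1 ->]] [f2 [H2 ->]]; exists (fun t => f1 t + f2 t).
  by split=> [t|]; [exact: act_imageD | rewrite big_split].
Qed.

Lemma spanned_gen i (g : T) (y : Mor (E i) X) : act_image (x g) y -> spanned_by x y.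
Proof.
move=> Hy; exists (fun t => if t == g then y else 0); split.
  by move=> t; case: eqP => [->|_] //; exact: act_image0.
by rewrite (bigD1 g) //= eqxx big1 ?addr0 // => t /negbTE ->.
Qed.

Lemma Gamma_fg_spanned (m : int) : (forall t, j t <= m) ->
  (forall i, i <= m -> forall y : Mor (E i) X, spanned_by x y) -> Gamma_fg E X m.
Proof.
move=> jm Hy.
exists #|T|, (fun o => j (enum_val o)), (fun o => x (enum_val o)).
split=> [o|i im y]; first exact: jm.
have [f [Hf ->]] := Hy i im y.
exists (fun o => f (enum_val o)); split=> [o|]; first exact: Hf.
by rewrite -(@big_enum_val _ 0 +%R T T f); apply: eq_bigl.
Qed.

End GammaSpan.

Section Window.
Variables (k : fieldType) (C : kcat k) (E : int -> C) (X : C).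
Variables (dim : int -> nat) (basis : forall a, 'I_(dim a) -> Mor (E a) X).
Hypothesis basis_span : forall a (y : Mor (E a) X),
  exists c : 'I_(dim a) -> k, y = \sum_(l < dim a) c l *: basis l.
Variables (lo : int) (D : nat).

Definition window_index := {u : 'I_D & 'I_(dim (lo + u%:Z))}.
Definition window_deg (w : window_index) : int := lo + (tag w)%:Z.
Definition window_gen (w : window_index) : Mor (E (window_deg w)) X :=
  basis (tagged w).

Lemma window_degP (a : int) :
  lo <= a < lo + D%:Z -> exists u : 'I_D, lo + u%:Z = a.
Proof.
move=> /andP[loa aD]; have uD : (absz (a - lo)%R < D)%N by lia.
by exists (Ordinal uD); rewrite /=; lia.
Qed.

Lemma window_spanned_hom (a : int) (y : Mor (E a) X) :
  lo <= a < lo + D%:Z -> spanned_by window_gen y.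
Proof.
move=> /window_degP[u e]; case: a / e y => y.
have [c ->] := basis_span y; apply: spanned_sum => l _.
apply: (spanned_gen (g := existT _ u l)).
by right; left; exists erefl, (c l).
Qed.

Lemma window_spanned_comp (a i : int) (z : Mor (E a) X) (b : Mor (E i) (E a)) :
  lo <= a < lo + D%:Z -> i < a -> spanned_by window_gen (comp z b).
Proof.
move=> /window_degP[u e]; case: a / e z b => z b ltia.
have [c ->] := basis_span z; rewrite comp_suml; apply: spanned_sum => l _.
rewrite compZl -compZr; apply: (spanned_gen (g := existT _ u l)).
by left; split=> //; exists (c l *: b).
Qed.

End Window.

Section Coherence.
Variables (k : fieldType) (C : kcat k) (E : int -> C).

Lemma coherent_Gamma_fg : (forall (i : int) (X : C), findim (Mor (E i) X)) ->
  coherent E -> forall (X : C) (m : int), Gamma_fg E X m.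
Proof.
move=> Efin [_ Ecoh] X m; have [s [ij [ijm [n Hn]]]] := Ecoh X m.
have [dim [basis basis_span]] := findim_basis (Efin^~ X).
have [lo lo_le lo_ij] := int_family_lbound ij (Num.min n m).
have /andP[lo_n lo_m] : (lo <= n) && (lo <= m) by rewrite -le_min.
pose D := absz (m + 1 - lo)%R.
apply: (Gamma_fg_spanned (x := window_gen basis (lo:=lo) (D:=D))) => [w|i im y].
  rewrite /window_deg /D; move: (nat_of_ord (tag w)) (ltn_ord (tag w)) => u; lia.
case: (ltP i lo) => [ilo | loi]; last first.
  by apply: (window_spanned_hom basis_span); apply/andP; split; lia.
have [N [tt [f [a ->]]]] := Hn i (lt_le_trans ilo lo_n) y.
apply: spanned_sum => l _; apply: (window_spanned_comp basis_span).
  by apply/andP; split; have := lo_ij (tt l); have := ijm (tt l); lia.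
by have := lo_ij (tt l); lia.
Qed.

Lemma Gamma_fg_coherent : projective_seq E ->
  (forall (X : C) (m : int), Gamma_fg E X m) -> coherent E.
Proof.
move=> Eproj EGamma; split=> // X m.
have [s [j [x [jm Hy]]]] := EGamma X m.
exists s, j; split=> //.
have [lo lo_m lo_j] := int_family_lbound j m.
exists lo => i ilo y; have [f [Hf ->]] := Hy i (ltW (lt_le_trans ilo lo_m)) y.
have Ha t : {a : Mor (E i) (E (j t)) | f t = comp (x t) a}.
  apply: constructive_indefinite_description.
  by apply: act_image_lt (Hf t); have := lo_j t; lia.
exists s, id, x, (fun t => sval (Ha t)).
by apply: eq_bigr => t _; exact: (svalP (Ha t)).
Qed.

End Coherence.

Definition ord_case (s : nat) (P : 'I_s.+1 -> Type) (x0 : P ord0)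
    (xs : forall t, P (lift ord0 t)) (t : 'I_s.+1) : P t :=
  match unliftP ord0 t with
  | UnliftSome u e => eq_rect_r P (xs u) e
  | UnliftNone e => eq_rect_r P x0 e
  end.

Lemma ord_case0 (s : nat) (P : 'I_s.+1 -> Type) x0 xs : @ord_case s P x0 xs ord0 = x0.
Proof.
rewrite /ord_case; case: (unliftP ord0 ord0) => [u e|e].
  by exfalso; move/eqP: e; rewrite (negbTE (neq_lift _ _)).
by rewrite (eq_irrelevance e erefl).
Qed.

Lemma ord_caseS (s : nat) (P : 'I_s.+1 -> Type) x0 xs u :
  @ord_case s P x0 xs (lift ord0 u) = xs u.
Proof.
rewrite /ord_case; case: (unliftP ord0 (lift ord0 u)) => [u' e|e].
  by have eu := lift_inj (esym e); subst u'; rewrite (eq_irrelevance e erefl).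
by exfalso; move/eqP: e; rewrite eq_sym (negbTE (neq_lift _ _)).
Qed.

Section Abelian.
Variables (k : fieldType) (C : kcat k).

Lemma biproduct_exists : abelian C -> forall (s : nat) (F : 'I_s -> C),
  exists S inj prj, @is_biproduct k C s F S inj prj.
Proof.
move=> [[Z [Z_out _]] [Cbin _]]; elim=> [|s IH] F.
  exists Z, (fun=> 0), (fun=> 0).
  by split; [case | case | rewrite big_ord0 (Z_out Z (idm Z))].
have [S' [inj' [prj' [prj_inj' prj_inj0' sum_id']]]] := IH (fun t => F (lift ord0 t)).
have [S [i1 [i2 [p1 [p2 [e1 e2 e3 e4 e5]]]]]] := Cbin (F ord0) S'.
pose inj := @ord_case s (fun t => Mor (F t) S) i1 (fun t => comp i2 (inj' t)).
pose prj := @ord_case s (fun t => Mor S (F t)) p1 (fun t => comp (prj' t) p2).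
exists S, inj, prj; split.
- move=> t; case: (unliftP ord0 t) => [u ->|->];
    rewrite /inj /prj ?ord_caseS ?ord_case0 //.
  by rewrite -compA (compA p2 i2) e2 comp1m prj_inj'.
- move=> t u; case: (unliftP ord0 t) => [t' ->|->];
    case: (unliftP ord0 u) => [u' ->|->];
    rewrite /inj /prj ?ord_caseS ?ord_case0 ?eqxx // => ne.
  + by rewrite -compA (compA p2 i2) e2 comp1m prj_inj0'.
  + by rewrite -compA e4 compm0.
  + by rewrite compA e3 comp0m.
- rewrite big_ord_recl /inj /prj ord_case0.
  under eq_bigr => u _ do rewrite !ord_caseS -compA (compA (inj' u)).
  by rewrite -comp_sumr -comp_suml sum_id' comp1m ord_case0 e5.
Qed.

Section Biproduct.
Variables (s : nat) (F : 'I_s -> C) (S : C).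
Variables (inj : forall t, Mor (F t) S) (prj : forall t, Mor S (F t)).
Hypothesis Sbip : is_biproduct inj prj.

Lemma biproduct_comp_sum (Y : C) (g : Mor S Y) :
  g = \sum_t comp (comp g (inj t)) (prj t).
Proof.
have [_ _ sum_id] := Sbip.
by rewrite -{1}(compm1 g) -sum_id comp_sumr; apply: eq_bigr => t _; rewrite compA.
Qed.

Lemma biproduct_comp_inj (Y : C) (x : forall t, Mor (F t) Y) (t : 'I_s) :
  comp (\sum_u comp (x u) (prj u)) (inj t) = x t.
Proof.
have [prj_inj prj_inj0 _] := Sbip.
rewrite comp_suml (bigD1 t) //= -compA prj_inj compm1 big1 ?addr0 // => u ne.
by rewrite -compA prj_inj0 ?compm0 // eq_sym.
Qed.

End Biproduct.

Lemma cokernel_epi (X Y Q : C) (f : Mor X Y) (cok : Mor Y Q) :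
  is_cokernel f cok -> epi cok.
Proof.
move=> [cok_f cok_univ] W h1 h2 h12.
have h1f0 : comp (comp h1 cok) f = 0 by rewrite -compA cok_f compm0.
have [h [_ h_uniq]] := cok_univ W _ h1f0.
by rewrite -(h_uniq h1 erefl) -(h_uniq h2 (esym h12)).
Qed.

Lemma epi_of_zero_cokernel (X Y Q : C) (f : Mor X Y) (cok : Mor Y Q) :
  is_cokernel f cok -> is_zero_obj Q -> epi f.
Proof.
move=> [_ cok_univ] [Q_out _] W h1 h2 h12.
have h12f0 : comp (h1 - h2) f = 0 by rewrite compBl h12 subrr.
have [u [u_cok _]] := cok_univ W _ h12f0.
by apply/eqP; rewrite -subr_eq0 -u_cok (Q_out _ u) comp0m.
Qed.

Lemma zero_obj_epi0 (S X : C) : epi (0 : Mor S X) -> is_zero_obj X.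
Proof.
move=> epi0; have id0 : idm X = 0 by apply: epi0; rewrite comp1m comp0m.
by split=> Y f; [rewrite -(compm1 f) id0 compm0 | rewrite -(comp1m f) id0 comp0m].
Qed.

End Abelian.

Section Ampleness.
Variables (k : fieldType) (C : kcat k) (E : int -> C).

Lemma ample_surj_from_sum : abelian C -> projective_seq E ->
  (forall (i : int) (X : C), findim (Mor (E i) X)) ->
  ample E -> forall (X : C) (m : int), surj_from_sum E X m.
Proof.
move=> Cab Eproj Efin [Ecoh EC0] X m.
have [s [j [x [jm Hy]]]] := coherent_Gamma_fg Efin Ecoh X m.
have [S [inj [prj Sbip]]] := biproduct_exists Cab (fun t => E (j t)).
pose g : Mor S X := \sum_t comp (x t) (prj t).
exists s, j; split=> //; exists S, inj, prj; split=> //; exists g.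
have [_ [_ [_ [Ccok _]]]] := Cab.
have [Q [cok cokP]] := Ccok _ _ g.
have cok_x t : comp cok (x t) = 0.
  by rewrite -(biproduct_comp_inj Sbip x t) compA cokP.1 comp0m.
have [n Hn] := Eproj _ _ cok (cokernel_epi cokP).
apply: (epi_of_zero_cokernel cokP); apply: EC0.
exists (Num.min n (m + 1)) => i; rewrite lt_min ltzD1 => /andP[ilt im] phi.
have [psi <-] := Hn i ilt phi; have [f [Hf ->]] := Hy i im psi.
by rewrite comp_sumr big1 // => t _; exact: comp_act_image (cok_x t) (Hf t).
Qed.

Lemma surj_from_sum_ample : projective_seq E ->
  (forall (X : C) (m : int), surj_from_sum E X m) -> ample E.
Proof.
move=> Eproj Esurj; split.
  split=> // X m.
  have [s [ij [ijm [S [inj [prj [Sbip [g g_epi]]]]]]]] := Esurj X m.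
  exists s, ij; split=> //.
  have [n Hn] := Eproj _ _ g g_epi.
  exists n => i ilt y; have [h <-] := Hn i ilt y.
  exists s, id, (fun t => comp g (inj t)), (fun t => comp (prj t) h).
  rewrite {1}(biproduct_comp_sum Sbip g) comp_suml.
  by apply: eq_bigr => t _; rewrite compA.
move=> X [n Hn].
have [s [ij [ijm [S [inj [prj [Sbip [g g_epi]]]]]]]] := Esurj X (n - 1).
have g0 : g = 0.
  rewrite (biproduct_comp_sum Sbip g) big1 // => t _.
  by rewrite (Hn _ _ (comp g (inj t))) ?comp0m //; have := ijm t; lia.
by apply: (@zero_obj_epi0 _ _ S); rewrite -g0.
Qed.

End Ampleness.

Theorem lemma2p4 (k : fieldType) (C : kcat k) (HC : abelian C)
    (E : int -> C) (HE : projective_seq E)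
    (Hfin : forall (i : int) (X : C), findim (Mor (E i) X)) :
  (coherent E <-> forall (X : C) (m : int), Gamma_fg E X m) /\
  (ample E <-> forall (X : C) (m : int), surj_from_sum E X m).
Proof.
split; split.
- exact: coherent_Gamma_fg.
- exact: Gamma_fg_coherent.
- exact: ample_surj_from_sum.
- exact: surj_from_sum_ample.
Qed.
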